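(* The category $\mathbf{bPos}$ has finite products (the product of $A$ and $B$ is the set $A\times B$ with $(a_1,b_1)\cdots(a_n,b_n)\le(a,b)$ iff $a_1\cdots a_n\le a$ in $A$ and $b_1\cdots b_n\le b$ in $B$; the terminal object is a singleton $\{*\}$ with $*\cdots *\le *$ ($n$ factors) for every $n\ge0$), but this cartesian monoidal structure is not closed: there is a broad poset $C$ (e.g. the $3$-corolla $\gamma_3$) such that the functor $C\times - :\mathbf{bPos}\to\mathbf{bPos}$ does not preserve pushouts, hence has no right adjoint. This holds in both the commutative and the non-commutative setting.
   Context: For a set $A$, $A^{\cdot}$ is the free monoid on $A$ and $A^{+}$ the free commutative monoid on $A$ (unit $\epsilon$); $A^*$ denotes one of them consistently (non-commutative resp. commutative setting). A broad poset is a set $A$ with $R\subseteq A^*\times A$ (written $b\le a$) satisfying: reflexivity $a\le a$; transitivity: $a_1\cdots a_n\le a$ and $b_i\le a_i$ ($b_i\in A^*$, $n\ge0$) imply $b_1\cdots b_n\le a$; antisymmetry for elements of $A$. Monotone maps $f$ satisfy $b\le a\Rightarrow f(b)\le f(a)$ with $f$ extended multiplicatively; $\mathbf{bPos}$ is the resulting category. $\star$ denotes the singleton broad poset $\{*\}$ whose only relation is $*\le *$. For $n\ge0$, the $n$-corolla $\gamma_n$ is the set $\{r,l_1,\dots,l_n\}$ whose only relations besides reflexivity are $l_1\cdots l_n\le r$. A witnessing pushout: $\gamma_2\leftarrow\star\rightarrow\gamma_2$, where one map picks $r$ and the other picks $l_1$. *)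

From Stdlib Require Import List Permutation.
Import ListNotations.

Record bstr := BStr { car :> Type; brel : list car -> car -> Prop }.
Arguments brel {_} _ _.

(* Broad-poset axioms. comm = true: commutative setting (A^* = A^+, free
   commutative monoid), encoded as lists with a permutation-invariant relation;
   comm = false: non-commutative setting (A^* = free monoid = lists). *)
Definition is_bposet (comm : bool) (A : bstr) : Prop :=
  (forall a : A, brel [a] a) /\
  (forall (as_ : list A) (a : A) (bs : list (list A)),
      brel as_ a -> Forall2 (fun b ai => brel b ai) bs as_ -> brel (concat bs) a) /\
  (forall a b : A, brel [a] b -> brel [b] a -> a = b) /\
  (comm = true -> forall (l l' : list A) (a : A), Permutation l l' -> brel l a -> brel l' a).

Record bposet (comm : bool) := BPos { bp :> bstr; bp_ax : is_bposet comm bp }.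

Definition monotone {A B : bstr} (f : A -> B) : Prop :=
  forall (l : list A) (a : A), brel l a -> brel (map f l) (f a).

Definition prod_bstr (A B : bstr) : bstr :=
  BStr (A * B) (fun l p => brel (map fst l) (fst p) /\ brel (map snd l) (snd p)).

Definition term_bstr : bstr := BStr unit (fun _ _ => True).

(* The n-corolla gamma_n: carrier option (Fin.t n); None = root r,
   Some i = leaf l_{i+1}. Only relations: reflexivity and l_1...l_n <= r
   (up to permutation in the commutative setting). *)
Fixpoint fin_enum (n : nat) : list (Fin.t n) :=
  match n with
  | 0 => []
  | S m => Fin.F1 :: map Fin.FS (fin_enum m)
  end.

Definition corolla_leaves (n : nat) : list (option (Fin.t n)) :=
  map Some (fin_enum n).

Definition corolla (comm : bool) (n : nat) : bstr :=
  BStr (option (Fin.t n))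
       (fun l x => l = [x] \/
                   (x = None /\ (if comm then Permutation l (corolla_leaves n)
                                 else l = corolla_leaves n))).

Definition is_product_in_bPos (comm : bool) (A B : bposet comm) : Prop :=
  is_bposet comm (prod_bstr A B) /\
  @monotone (prod_bstr A B) A fst /\ @monotone (prod_bstr A B) B snd /\
  forall (X : bposet comm) (f : X -> A) (g : X -> B),
    monotone f -> monotone g ->
    exists h : X -> prod_bstr A B,
      monotone h /\ (forall x, fst (h x) = f x) /\ (forall x, snd (h x) = g x) /\
      forall h' : X -> prod_bstr A B,
        monotone h' -> (forall x, fst (h' x) = f x) -> (forall x, snd (h' x) = g x) ->
        forall x, h' x = h x.

Definition is_terminal_in_bPos (comm : bool) : Prop :=
  is_bposet comm term_bstr /\
  forall X : bposet comm,
    exists h : X -> term_bstr, monotone h /\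
      forall h' : X -> term_bstr, monotone h' -> forall x, h' x = h x.

Definition is_pushout (comm : bool) (X Y Z P : bstr)
    (f : X -> Y) (g : X -> Z) (i : Y -> P) (j : Z -> P) : Prop :=
  monotone f /\ monotone g /\ monotone i /\ monotone j /\
  (forall x, i (f x) = j (g x)) /\
  forall (Q : bposet comm) (u : Y -> Q) (v : Z -> Q),
    monotone u -> monotone v -> (forall x, u (f x) = v (g x)) ->
    exists h : P -> Q,
      monotone h /\ (forall y, h (i y) = u y) /\ (forall z, h (j z) = v z) /\
      forall h' : P -> Q,
        monotone h' -> (forall y, h' (i y) = u y) -> (forall z, h' (j z) = v z) ->
        forall p, h' p = h p.

Definition prod_map {C A B : Type} (f : A -> B) : C * A -> C * B :=
  fun p => (fst p, f (snd p)).

(* The functor C x - : bPos -> bPos has a right adjoint, expressed by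
   couniversal arrows: for every Q an object G Q and a monotone
   ev_Q : C x G Q -> Q such that every monotone f : C x X -> Q factors as
   ev_Q o (C x g) for a unique monotone g : X -> G Q. *)
Definition has_right_adjoint (comm : bool) (C : bstr) : Prop :=
  exists (G : bposet comm -> bposet comm)
         (ev : forall Q : bposet comm, prod_bstr C (G Q) -> Q),
    (forall Q, monotone (ev Q)) /\
    forall (X Q : bposet comm) (f : prod_bstr C X -> Q),
      monotone f ->
      exists g : X -> G Q,
        monotone g /\ (forall c x, ev Q (c, g x) = f (c, x)) /\
        forall g' : X -> G Q,
          monotone g' -> (forall c x, ev Q (c, g' x) = f (c, x)) ->
          forall x, g' x = g x.

From Stdlib Require Import List Permutation.
Import ListNotations.

(* The counterexample is the pushout gamma_2 <- * -> gamma_2 (root, first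
   leaf), whose corner is the grafted tree.  Multiplying by gamma_3 makes both
   legs discrete (arities 3 and 2 never match), and any pushout of discrete
   structures has only unary relations, while gamma_3 x (grafted tree) has a
   ternary one.  Finally, a right adjoint of C x - would make C x - preserve
   pushouts, by transposing maps C x P -> Q to maps P -> G Q. *)

Definition same_word (comm : bool) {T : Type} (l L : list T) : Prop :=
  if comm then Permutation l L else l = L.

Lemma same_word_refl comm {T} (l : list T) : same_word comm l l.
Proof. destruct comm; simpl; [apply Permutation_refl | reflexivity]. Qed.

Lemma same_word_cases comm {T} (l L : list T) :
  same_word comm l L -> l = L \/ (comm = true /\ Permutation l L).
Proof. destruct comm; simpl; auto. Qed.

Lemma same_word_length comm {T} (l L : list T) :
  same_word comm l L -> length l = length L.
Proof.
  intros [->|[_ H]]%same_word_cases; [reflexivity | apply Permutation_length, H].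
Qed.

Lemma same_word_singleton comm {T} (a : T) L : same_word comm [a] L -> L = [a].
Proof.
  intros [<-|[_ H]]%same_word_cases; [reflexivity|].
  apply Permutation_length_1_inv, H.
Qed.

Lemma same_word_map comm {T U} (f : T -> U) (l L : list T) :
  same_word comm l L -> same_word comm (map f l) (map f L).
Proof. destruct comm; simpl; [apply Permutation_map | intros ->; reflexivity]. Qed.

Lemma same_word_app_tail comm {T} (l L t : list T) :
  same_word comm l L -> same_word comm (l ++ t) (L ++ t).
Proof. destruct comm; simpl; [apply Permutation_app_tail | intros ->; reflexivity]. Qed.

Lemma bposet_rel_same_word comm (Q : bposet comm) (l L : list Q) a :
  same_word comm l L -> brel L a -> brel l a.
Proof.
  destruct (bp_ax _ Q) as [_ [_ [_ Hperm]]].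
  intros [->|[Hc HP]]%same_word_cases HL; [exact HL|].
  exact (Hperm Hc _ _ _ (Permutation_sym HP) HL).
Qed.

Lemma is_bposet_ext comm (T : Type) (R R' : list T -> T -> Prop) :
  (forall l a, R l a <-> R' l a) -> is_bposet comm (BStr T R) -> is_bposet comm (BStr T R').
Proof.
  intros E [Hrefl [Htrans [Hanti Hperm]]]; simpl in *.
  split; [|split; [|split]].
  - intros a; apply E, Hrefl.
  - intros as_ a bs Ha HF; apply E; apply (Htrans as_); [apply E, Ha|].
    revert HF; apply Forall2_impl; intros b c; apply E.
  - intros a b H1 H2; apply Hanti; apply E; assumption.
  - intros Hc l l' a HP H; apply E; apply (Hperm Hc l); [exact HP | apply E, H].
Qed.

Lemma concat_single_rel {T} (R : list T -> T -> Prop) bs a :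
  Forall2 R bs [a] -> R (concat bs) a.
Proof.
  intros HF; inversion HF as [|b a' bs' l' Hb Hnil]; subst.
  inversion Hnil; subst; simpl; rewrite app_nil_r; exact Hb.
Qed.

Lemma concat_singletons {T} (R : list T -> T -> Prop) bs as_ :
  (forall a, In a as_ -> forall b, R b a -> b = [a]) ->
  Forall2 R bs as_ -> concat bs = as_.
Proof.
  intros Hmin HF; induction HF as [|b a bs as_ Hb HF IH]; [reflexivity|].
  simpl; rewrite (Hmin a (or_introl eq_refl) b Hb), IH; [reflexivity|].
  intros x Hx; apply Hmin; right; exact Hx.
Qed.

Lemma concat_perm {T} (bs bs' : list (list T)) :
  Permutation bs bs' -> Permutation (concat bs) (concat bs').
Proof.
  intros HP; rewrite <- (map_id bs), <- (map_id bs'), <- !flat_map_concat_map.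
  apply Permutation_flat_map, HP.
Qed.

Lemma Forall2_permute_right {T U} (R : T -> U -> Prop) bs as_ L :
  Forall2 R bs as_ -> Permutation as_ L ->
  exists bs', Permutation bs bs' /\ Forall2 R bs' L.
Proof.
  intros HF HP; apply Forall2_flip in HF.
  destruct (Permutation_Forall2 HP HF) as [bs' [HP' HF']].
  exists bs'; split; [exact HP' | apply Forall2_flip, HF'].
Qed.

Section Generated.
Variable comm : bool.
Variable T : Type.
Variable gens : T -> list (list T).

Definition gen_rel (l : list T) (x : T) : Prop :=
  l = [x] \/ exists L, In L (gens x) /\ same_word comm l L.

Definition gen_bstr : bstr := BStr T gen_rel.

Lemma gen_rel_gens L x : In L (gens x) -> gen_rel L x.
Proof. intros HL; right; exists L; split; [exact HL | apply same_word_refl]. Qed.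

Lemma gen_rel_minimal b x : gens x = [] -> gen_rel b x -> b = [x].
Proof. intros E [H|[L [HL _]]]; [exact H | rewrite E in HL; destruct HL]. Qed.

Lemma gen_rel_perm l l' a :
  comm = true -> Permutation l l' -> gen_rel l a -> gen_rel l' a.
Proof.
  intros Hc HP [->|[L [HL Hw]]].
  - left; apply Permutation_length_1_inv, HP.
  - right; exists L; split; [exact HL|].
    rewrite Hc in Hw |- *; simpl in *.
    exact (Permutation_trans (Permutation_sym HP) Hw).
Qed.

Lemma gen_closed_on_minimal x L bs :
  (forall a, In a L -> gens a = []) -> In L (gens x) ->
  Forall2 gen_rel bs L -> gen_rel (concat bs) x.
Proof.
  intros Hmin HL HF.
  rewrite (concat_singletons _ _ _ (fun a Ha b => gen_rel_minimal b a (Hmin a Ha)) HF).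
  apply gen_rel_gens, HL.
Qed.

Lemma gen_monotone (Q : bposet comm) (h : T -> Q) :
  (forall x L, In L (gens x) -> brel (map h L) (h x)) -> @monotone gen_bstr Q h.
Proof.
  intros Hgen l a [->|[L [HL Hw]]].
  - apply (bp_ax _ Q).
  - apply (bposet_rel_same_word comm Q _ (map h L)); [apply same_word_map, Hw|].
    apply Hgen, HL.
Qed.

Hypothesis gens_antisym : forall a b, In [a] (gens b) -> In [b] (gens a) -> a = b.
Hypothesis gens_closed :
  forall x L bs, In L (gens x) -> Forall2 gen_rel bs L -> gen_rel (concat bs) x.

Lemma gen_bp : is_bposet comm gen_bstr.
Proof.
  split; [|split; [|split]]; simpl.
  - intros a; left; reflexivity.
  - intros as_ a bs [->|[L [HL Hw]]] HF; [apply concat_single_rel, HF|].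
    destruct (same_word_cases _ _ _ Hw) as [->|[Hc HP]]; [exact (gens_closed _ _ _ HL HF)|].
    destruct (Forall2_permute_right _ _ _ _ HF HP) as [bs' [HP' HF']].
    apply (gen_rel_perm (concat bs')); [exact Hc | apply concat_perm, Permutation_sym, HP'|].
    exact (gens_closed _ _ _ HL HF').
  - intros a b [H1|[L1 [HL1 Hw1]]] H2; [injection H1; auto|].
    rewrite (same_word_singleton _ _ _ Hw1) in HL1.
    destruct H2 as [H2|[L2 [HL2 Hw2]]]; [injection H2; auto|].
    rewrite (same_word_singleton _ _ _ Hw2) in HL2.
    exact (gens_antisym _ _ HL1 HL2).
  - intros Hc l l' a; apply gen_rel_perm, Hc.
Qed.

End Generated.

Arguments gen_rel comm {T} gens l x.
Arguments gen_bstr comm {T} gens.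
Arguments gen_rel_gens comm {T} gens L x.
Arguments gen_rel_minimal comm {T} gens b x.
Arguments gen_closed_on_minimal comm {T} gens x L bs.
Arguments gen_monotone comm {T} gens Q h.
Arguments gen_bp comm {T} gens.

Definition corolla_gens (n : nat) (x : option (Fin.t n)) : list (list (option (Fin.t n))) :=
  match x with None => [corolla_leaves n] | Some _ => [] end.

Lemma corolla_rel_iff comm n l x :
  @brel (corolla comm n) l x <-> gen_rel comm (corolla_gens n) l x.
Proof.
  split; intros [H|H]; try (left; exact H); right.
  - destruct H as [-> H]; exists (corolla_leaves n); simpl; auto.
  - destruct H as [L [HL H]]; destruct x as [k|]; simpl in HL; [destruct HL|].
    destruct HL as [<-|[]]; auto.
Qed.

Lemma in_corolla_leaves n x : In x (corolla_leaves n) -> exists k, x = Some k.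
Proof. unfold corolla_leaves; intros (k & <- & _)%in_map_iff; exists k; reflexivity. Qed.

Lemma length_corolla_leaves n : length (corolla_leaves n) = n.
Proof.
  unfold corolla_leaves; rewrite length_map.
  induction n as [|n IH]; simpl; [reflexivity | rewrite length_map, IH; reflexivity].
Qed.

Lemma corolla_bp comm n : is_bposet comm (corolla comm n).
Proof.
  apply (is_bposet_ext comm _ (gen_rel comm (corolla_gens n))).
  { intros l a; symmetry; apply corolla_rel_iff. }
  apply gen_bp.
  - intros [a|] [b|] Hab Hba; simpl in *; try contradiction; reflexivity.
  - intros x L bs HL; apply (gen_closed_on_minimal comm _ x L bs); [|exact HL].
    intros a Ha; destruct x as [k|]; simpl in HL; [destruct HL|].
    destruct HL as [<-|[]]; destruct (in_corolla_leaves n a Ha) as [k ->]; reflexivity.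
Qed.

Lemma corolla_monotone comm n (Q : bposet comm) (h : option (Fin.t n) -> Q) :
  brel (map h (corolla_leaves n)) (h None) -> @monotone (corolla comm n) Q h.
Proof.
  intros Hroot l a Hla; apply corolla_rel_iff in Hla; revert l a Hla.
  apply (gen_monotone comm (corolla_gens n) Q h).
  intros [k|] L HL; simpl in HL; [destruct HL|]; destruct HL as [<-|[]]; exact Hroot.
Qed.

Definition discrete (A : bstr) : Prop := forall (l : list A) (a : A), brel l a -> l = [a].

Definition disc (T : Type) : bstr := BStr T (fun l x => l = [x]).

Lemma disc_bp comm T : is_bposet comm (disc T).
Proof.
  split; [|split; [|split]]; simpl.
  - reflexivity.
  - intros as_ a bs -> HF; apply (concat_single_rel (fun l x => l = [x])), HF.
  - intros a b H _; injection H; auto.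
  - intros _ l l' a HP ->; apply Permutation_length_1_inv, HP.
Qed.

Definition disc_bposet comm (T : Type) : bposet comm := BPos comm (disc T) (disc_bp comm T).

Lemma discrete_monotone comm (A : bstr) (Q : bposet comm) (h : A -> Q) :
  discrete A -> monotone h.
Proof. intros HA l a Hla; rewrite (HA l a Hla); apply (bp_ax _ Q). Qed.

(* In a product of corollas of distinct arities (none unary) the leaf words
   can never be matched, so the product is discrete. *)
Lemma corolla_prod_discrete comm m n :
  m <> n -> m <> 1 -> n <> 1 -> discrete (prod_bstr (corolla comm m) (corolla comm n)).
Proof.
  intros Hmn Hm Hn L [a b] [H1 H2]; simpl in H1, H2.
  pose proof (length_corolla_leaves m) as Em; pose proof (length_corolla_leaves n) as En.
  destruct H1 as [H1|[_ H1]], H2 as [H2|[_ H2]].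
  - destruct L as [|q [|q' L]]; simpl in H1; try discriminate.
    injection H1 as E1; injection H2 as E2; destruct q; simpl in *; subst; reflexivity.
  - apply (f_equal (@length _)) in H1; apply same_word_length in H2.
    rewrite length_map in H1, H2; simpl in H1; congruence.
  - apply (f_equal (@length _)) in H2; apply same_word_length in H1.
    rewrite length_map in H1, H2; simpl in H2; congruence.
  - apply same_word_length in H1; apply same_word_length in H2.
    rewrite length_map in H1, H2; congruence.
Qed.

(* Transitivity is
   checked componentwise, which needs [Forall2] to commute with projections. *)
Lemma Forall2_map_rel {T U V W} (R : list V -> W -> Prop) (f : T -> V) (g : U -> W)
    (S : list T -> U -> Prop) bs as_ :
  (forall b a, S b a -> R (map f b) (g a)) ->
  Forall2 S bs as_ -> Forall2 R (map (map f) bs) (map g as_).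
Proof. intros Hfg HF; induction HF; simpl; constructor; auto. Qed.

Lemma prod_bp comm (A B : bposet comm) : is_bposet comm (prod_bstr A B).
Proof.
  destruct (bp_ax _ A) as [rA [tA [aA pA]]], (bp_ax _ B) as [rB [tB [aB pB]]].
  split; [|split; [|split]]; simpl.
  - intros a; split; [apply rA | apply rB].
  - intros as_ a bs [H1 H2] HF; rewrite !concat_map; split.
    + apply (tA _ _ _ H1); revert HF; apply Forall2_map_rel; intros b c [Hb _]; exact Hb.
    + apply (tB _ _ _ H2); revert HF; apply Forall2_map_rel; intros b c [_ Hb]; exact Hb.
  - intros [a1 b1] [a2 b2] [H1 H2] [H3 H4]; simpl in *; f_equal; auto.
  - intros Hc l l' a HP [H1 H2]; split.
    + exact (pA Hc _ _ _ (Permutation_map fst HP) H1).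
    + exact (pB Hc _ _ _ (Permutation_map snd HP) H2).
Qed.

Lemma prod_univ comm (A B : bposet comm) : is_product_in_bPos comm A B.
Proof.
  split; [apply prod_bp|]; split; [intros l a [H _]; exact H|].
  split; [intros l a [_ H]; exact H|].
  intros X f g Hf Hg; exists (fun x => (f x, g x)); split; [|split; [|split]].
  - intros l a H; split; simpl; rewrite map_map; [apply Hf | apply Hg]; exact H.
  - reflexivity.
  - reflexivity.
  - intros h' _ H1 H2 x; rewrite <- (H1 x), <- (H2 x); destruct (h' x); reflexivity.
Qed.

Lemma term_ok comm : is_terminal_in_bPos comm.
Proof.
  split.
  - split; [|split; [|split]]; simpl; auto; intros [] [] _ _; reflexivity.
  - intros X; exists (fun _ => tt); split; [intros l a _; exact I|].
    intros h' _ x; destruct (h' x); reflexivity.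
Qed.

Lemma monotone_comp {A B D : bstr} (f : A -> B) (g : B -> D) :
  monotone f -> monotone g -> monotone (fun x => g (f x)).
Proof. intros Hf Hg l a H; rewrite <- map_map; apply Hg, Hf, H. Qed.

Lemma monotone_prod_map {C A B : bstr} (f : A -> B) :
  monotone f -> @monotone (prod_bstr C A) (prod_bstr C B) (prod_map f).
Proof.
  intros Hf l p [H1 H2]; simpl; rewrite !map_map; split; simpl.
  - exact H1.
  - rewrite <- (map_map snd f); apply Hf, H2.
Qed.

Section RightAdjoint.
(* A right adjoint G of C x - (given by its counits ev) forces C x - to
   preserve pushouts: transposition identifies maps C x P -> Q with maps
   P -> G Q, where the pushout property of P applies. *)
Variables (comm : bool) (C : bstr) (G : bposet comm -> bposet comm).
Variable ev : forall Q : bposet comm, prod_bstr C (G Q) -> Q.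
Hypothesis ev_monotone : forall Q, monotone (ev Q).
Hypothesis transpose :
  forall (X Q : bposet comm) (f : prod_bstr C X -> Q), monotone f ->
  exists g : X -> G Q,
    monotone g /\ (forall c x, ev Q (c, g x) = f (c, x)) /\
    forall g' : X -> G Q,
      monotone g' -> (forall c x, ev Q (c, g' x) = f (c, x)) -> forall x, g' x = g x.

Lemma transpose_injective (X Q : bposet comm) (g1 g2 : X -> G Q) :
  monotone g1 -> monotone g2 -> (forall c x, ev Q (c, g1 x) = ev Q (c, g2 x)) ->
  forall x, g1 x = g2 x.
Proof.
  intros Hg1 Hg2 E x.
  destruct (transpose X Q (fun p => ev Q (prod_map g1 p))) as [g [_ [_ Hunique]]].
  { apply monotone_comp; [apply monotone_prod_map, Hg1 | apply ev_monotone]. }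
  rewrite (Hunique g1 Hg1 (fun c x => eq_refl) x).
  symmetry; apply (Hunique g2 Hg2); intros c y; symmetry; apply E.
Qed.

Lemma right_adjoint_preserves_pushout (X Y Z P : bposet comm) f g i j :
  is_pushout comm X Y Z P f g i j ->
  is_pushout comm (prod_bstr C X) (prod_bstr C Y) (prod_bstr C Z) (prod_bstr C P)
    (prod_map f) (prod_map g) (prod_map i) (prod_map j).
Proof.
  intros [Hf [Hg [Hi [Hj [Hsq Hpo]]]]].
  do 4 (split; [apply monotone_prod_map; assumption|]).
  split; [intros [c x]; unfold prod_map; simpl; rewrite Hsq; reflexivity|].
  intros Q u v Hu Hv Huv.
  destruct (transpose Y Q u Hu) as [tu [Htu [Etu Utu]]].
  destruct (transpose Z Q v Hv) as [tv [Htv [Etv Utv]]].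
  assert (Hsq' : forall x, tu (f x) = tv (g x)).
  { apply transpose_injective; try (apply monotone_comp; assumption).
    intros c x; rewrite Etu, Etv; apply (Huv (c, x)). }
  destruct (Hpo (G Q) tu tv Htu Htv Hsq') as [h [Hh [Ehi [Ehj Uh]]]].
  exists (fun p => ev Q (prod_map h p)); split; [|split; [|split]].
  - apply (@monotone_comp (prod_bstr C P) (prod_bstr C (G Q)) Q (prod_map h) (ev Q)).
    + apply monotone_prod_map, Hh.
    + apply ev_monotone.
  - intros [c y]; unfold prod_map; simpl; rewrite Ehi; apply Etu.
  - intros [c z]; unfold prod_map; simpl; rewrite Ehj; apply Etv.
  - intros h' Hh' E1 E2 [c p].
    destruct (transpose P Q h' Hh') as [t' [Ht' [Et' _]]].
    assert (Ht'h : forall p, t' p = h p).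
    { apply Uh; [exact Ht' | intros y | intros z].
      - apply (Utu (fun y => t' (i y))); [apply monotone_comp; assumption|].
        intros c' y'; rewrite Et'; apply (E1 (c', y')).
      - apply (Utv (fun z => t' (j z))); [apply monotone_comp; assumption|].
        intros c' z'; rewrite Et'; apply (E2 (c', z')). }
    rewrite <- Et'; unfold prod_map; simpl; rewrite Ht'h; reflexivity.
Qed.

End RightAdjoint.

Lemma has_right_adjoint_preserves_pushouts comm (C : bstr) :
  has_right_adjoint comm C ->
  forall (X Y Z P : bposet comm) f g i j,
  is_pushout comm X Y Z P f g i j ->
  is_pushout comm (prod_bstr C X) (prod_bstr C Y) (prod_bstr C Z) (prod_bstr C P)
    (prod_map f) (prod_map g) (prod_map i) (prod_map j).
Proof.
  intros [G [ev [Hev Htr]]]; exact (right_adjoint_preserves_pushout comm C G ev Hev Htr).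
Qed.

(* A pushout of discrete broad structures has only unary relations: its legs
   are monotone into the discrete broad poset on P, so the mediating map is a
   monotone map to a discrete target and sends each relation to a one-letter
   word. *)
Lemma pushout_of_discrete_unary comm (X Y Z P : bstr) f g i j :
  discrete Y -> discrete Z -> is_pushout comm X Y Z P f g i j ->
  forall (l : list P) (p : P), brel l p -> length l = 1.
Proof.
  intros HY HZ [_ [_ [_ [_ [Hsq Hpo]]]]] l p Hlp.
  destruct (Hpo (disc_bposet comm P) i j) as [h [Hh _]];
    [apply discrete_monotone, HY | apply discrete_monotone, HZ | exact Hsq |].
  rewrite <- (length_map h l), (Hh l p Hlp); reflexivity.
Qed.

(* The witnessing pushout: gamma_2 <- * -> gamma_2 picking the root and the
   first leaf, glued into the tree obtained by grafting the first corolla onto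
   the first leaf of the second one. *)
Inductive grafted_pt := leaf1 | leaf2 | mid | leaf3 | root.

Definition grafted_gens (x : grafted_pt) : list (list grafted_pt) :=
  match x with
  | mid => [[leaf1; leaf2]]
  | root => [[mid; leaf3]; [leaf1; leaf2; leaf3]]
  | _ => []
  end.

(* Only one composite is not a generator or built from minimal elements:
   grafting a word below [mid] into [mid leaf3], which yields the composite
   generator of [root]. *)
Lemma grafted_bp comm : is_bposet comm (gen_bstr comm grafted_gens).
Proof.
  assert (Hleaf : forall a, In a [leaf1; leaf2; leaf3] -> grafted_gens a = []).
  { intros a Ha; simpl in Ha; intuition subst; reflexivity. }
  apply gen_bp.
  - intros [] [] Hab; simpl in Hab; intuition discriminate.
  - intros x L bs HL HF; destruct x; simpl in HL; try contradiction.
    + destruct HL as [<-|[]].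
      apply (gen_closed_on_minimal comm _ mid [leaf1; leaf2] bs); [|left; reflexivity | exact HF].
      intros a Ha; apply Hleaf; simpl in *; tauto.
    + destruct HL as [<-|[<-|[]]].
      * inversion HF as [|b1 a1 bs1 l1 Hb1 HF1]; subst.
        inversion HF1 as [|b2 a2 bs2 l2 Hb2 HF2]; subst; inversion HF2; subst.
        simpl; rewrite app_nil_r, (gen_rel_minimal comm _ b2 leaf3 eq_refl Hb2).
        destruct Hb1 as [->|[L [HL Hw]]];
          [apply gen_rel_gens; left; reflexivity|].
        simpl in HL; destruct HL as [<-|[]].
        right; exists [leaf1; leaf2; leaf3]; split; [right; left; reflexivity|].
        apply (same_word_app_tail comm _ _ [leaf3] Hw).
      * apply (gen_closed_on_minimal comm _ root _ bs Hleaf); [right; left; reflexivity | exact HF].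
Qed.

Definition point comm : bposet comm := disc_bposet comm unit.
Definition gamma2 comm : bposet comm := BPos comm (corolla comm 2) (corolla_bp comm 2).
Definition grafted comm : bposet comm := BPos comm (gen_bstr comm grafted_gens) (grafted_bp comm).

Definition pick_root (_ : unit) : option (Fin.t 2) := None.
Definition pick_leaf (_ : unit) : option (Fin.t 2) := Some Fin.F1.

Definition incl_lower (y : option (Fin.t 2)) : grafted_pt :=
  match y with None => mid | Some Fin.F1 => leaf1 | Some _ => leaf2 end.
Definition incl_upper (z : option (Fin.t 2)) : grafted_pt :=
  match z with None => root | Some Fin.F1 => mid | Some _ => leaf3 end.

Lemma fin2_cases (k : Fin.t 2) : k = Fin.F1 \/ k = Fin.FS Fin.F1.
Proof.
  pattern k; apply Fin.caseS'; [left; reflexivity|].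
  intro p; pattern p; apply Fin.caseS'; [right; reflexivity|].
  intro q; apply Fin.case0, q.
Qed.

(* The mediating map is forced on every point; it is monotone because the
   composite relation of the tree is sent to a composite in Q. *)
Lemma grafting_is_pushout comm :
  is_pushout comm (point comm) (gamma2 comm) (gamma2 comm) (grafted comm)
    pick_root pick_leaf incl_lower incl_upper.
Proof.
  split; [apply discrete_monotone; intros l a H; exact H|].
  split; [apply discrete_monotone; intros l a H; exact H|].
  split; [apply corolla_monotone, gen_rel_gens; left; reflexivity|].
  split; [apply corolla_monotone, gen_rel_gens; left; reflexivity|].
  split; [intros []; reflexivity|].
  intros Q u v Hu Hv Huv.
  assert (Hglue : u None = v (Some Fin.F1)) by exact (Huv tt).
  assert (Hlower : brel [u (Some Fin.F1); u (Some (Fin.FS Fin.F1))] (u None))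
    by (apply (Hu (corolla_leaves 2)); right; split; [reflexivity | apply same_word_refl]).
  assert (Hupper : brel [v (Some Fin.F1); v (Some (Fin.FS Fin.F1))] (v None))
    by (apply (Hv (corolla_leaves 2)); right; split; [reflexivity | apply same_word_refl]).
  destruct (bp_ax _ Q) as [HQrefl [HQtrans _]].
  exists (fun p => match p with
           | leaf1 => u (Some Fin.F1) | leaf2 => u (Some (Fin.FS Fin.F1))
           | mid => u None | leaf3 => v (Some (Fin.FS Fin.F1)) | root => v None end).
  split; [|split; [|split]].
  - apply gen_monotone; intros [] L HL; simpl in HL; try contradiction;
      [destruct HL as [<-|[]] | destruct HL as [<-|[<-|[]]]]; simpl.
    + exact Hlower.
    + rewrite Hglue; exact Hupper.
    + apply (HQtrans _ _ [[u (Some Fin.F1); u (Some (Fin.FS Fin.F1))]; [v (Some (Fin.FS Fin.F1))]]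
               Hupper).
      constructor; [rewrite <- Hglue; exact Hlower|].
      constructor; [apply HQrefl | constructor].
  - intros [k|]; [destruct (fin2_cases k) as [-> | ->]|]; reflexivity.
  - intros [k|]; [destruct (fin2_cases k) as [-> | ->]|]; try reflexivity; exact Hglue.
  - intros h' _ H1 H2 [].
    + exact (H1 (Some Fin.F1)).
    + exact (H1 (Some (Fin.FS Fin.F1))).
    + exact (H1 None).
    + exact (H2 (Some (Fin.FS Fin.F1))).
    + exact (H2 None).
Qed.

Lemma grafted_ternary_relation comm :
  @brel (prod_bstr (corolla comm 3) (grafted comm))
    [(Some Fin.F1, leaf1); (Some (Fin.FS Fin.F1), leaf2); (Some (Fin.FS (Fin.FS Fin.F1)), leaf3)]
    (None, root).
Proof.
  split; simpl.
  - right; split; [reflexivity | apply same_word_refl].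
  - apply gen_rel_gens; right; left; reflexivity.
Qed.

(* gamma_3 x - turns the grafting pushout into a square of discrete broad
   posets whose corner still has a ternary relation, so it is no pushout. *)
Lemma gamma3_prod_not_pushout comm :
  ~ is_pushout comm (prod_bstr (corolla comm 3) (point comm))
      (prod_bstr (corolla comm 3) (gamma2 comm)) (prod_bstr (corolla comm 3) (gamma2 comm))
      (prod_bstr (corolla comm 3) (grafted comm))
      (prod_map pick_root) (prod_map pick_leaf) (prod_map incl_lower) (prod_map incl_upper).
Proof.
  intros Hpo.
  assert (Hdisc : discrete (prod_bstr (corolla comm 3) (gamma2 comm)))
    by (apply corolla_prod_discrete; discriminate).
  pose proof (pushout_of_discrete_unary comm _ _ _ _ _ _ _ _ Hdisc Hdisc Hpo _ _
                (grafted_ternary_relation comm)) as Hlen.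
  discriminate Hlen.
Qed.

Theorem proposition3p2 :
  forall comm : bool,
    (* finite products *)
    (forall A B : bposet comm, is_product_in_bPos comm A B) /\
    is_terminal_in_bPos comm /\
    (* C := gamma_3 is a broad poset, C x - does not preserve pushouts ... *)
    is_bposet comm (corolla comm 3) /\
    (exists (X Y Z P : bposet comm) (f : X -> Y) (g : X -> Z) (i : Y -> P) (j : Z -> P),
        is_pushout comm X Y Z P f g i j /\
        ~ is_pushout comm (prod_bstr (corolla comm 3) X) (prod_bstr (corolla comm 3) Y)
                          (prod_bstr (corolla comm 3) Z) (prod_bstr (corolla comm 3) P)
                          (prod_map f) (prod_map g) (prod_map i) (prod_map j)) /\
    (* ... hence has no right adjoint *)
    ~ has_right_adjoint comm (corolla comm 3).
Proof.
  intros comm.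
  split; [apply prod_univ|].
  split; [apply term_ok|].
  split; [apply corolla_bp|].
  split.
  - exists (point comm), (gamma2 comm), (gamma2 comm), (grafted comm),
      pick_root, pick_leaf, incl_lower, incl_upper.
    split; [apply grafting_is_pushout | apply gamma3_prod_not_pushout].
  - intros Hadj; apply (gamma3_prod_not_pushout comm).
    apply (has_right_adjoint_preserves_pushouts comm _ Hadj), grafting_is_pushout.
Qed.
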